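(* Let $\mathcal C\subseteq\mathbf F_q^n$ be a formally self-orthogonal linear $[n,k,d]$ code. Then for each $1\le i\le n$, either $\mathcal P_i=\{(c,0):c\in\mathcal P_{i-1}\}$ or $\mathcal F_{i-1}=\{(0,c):c\in\mathcal F_i\}$. Equivalently, $\dim\mathcal P_{i-1}=\dim\mathcal P_i$ or $\dim\mathcal F_{i-1}=\dim\mathcal F_i$.
   Context: The coordinate order is fixed. Define $\mathcal P_0=\mathcal F_n=0$, $\mathcal P_n=\mathcal F_0=\mathcal C$, and for $1\le i\le n-1$, $\mathcal P_i=\{(c_1,\dots,c_i):(c_1,\dots,c_i,0,\dots,0)\in\mathcal C\}\subseteq\mathbf F_q^i$ and $\mathcal F_i=\{(c_{i+1},\dots,c_n):(0,\dots,0,c_{i+1},\dots,c_n)\in\mathcal C\}\subseteq\mathbf F_q^{n-i}$. A code $\mathcal C$ is formally self-orthogonal if there is an $n$-tuple $\mathbf x$ of nonzero elements of $\mathbf F_q$ with $\mathcal C\subseteq\mathbf x*\mathcal C^\perp$, where $*$ is coordinate-wise multiplication and $\mathcal C^\perp$ is the dual code under the standard inner product. *)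

From HB Require Import structures.
From mathcomp Require Import all_boot all_order all_algebra all_field.
Set Implicit Arguments. Unset Strict Implicit. Unset Printing Implicit Defensive.
Import GRing.Theory.
Local Open Scope ring_scope.

Section Codes.
Variable F : finFieldType.

(* padR m k c : the vector (c, 0, ..., 0) in F^k, for c in F^m (m <= k). *)
Definition padR (m k : nat) (c : 'rV[F]_m) : 'rV[F]_k :=
  \row_(j < k) oapp (fun t : 'I_m => c ord0 t) 0 (insub (val j)).

(* padL s m k c : the vector (0, ..., 0, c) in F^k with s leading zeros. *)
Definition padL (s m k : nat) (c : 'rV[F]_m) : 'rV[F]_k :=
  \row_(j < k) if (s <= val j)%N
               then oapp (fun t : 'I_m => c ord0 t) 0 (insub (val j - s)%N)
               else 0.

(* P_i = {(c_1..c_i) : (c_1..c_i,0..0) in C}  (a subset of F^i) *)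
Definition Pcode (n : nat) (C : {vspace 'rV[F]_n}) (i : nat) : {set 'rV[F]_i} :=
  [set c : 'rV[F]_i | padR n c \in C].

(* F_i = {(c_{i+1}..c_n) : (0..0,c_{i+1}..c_n) in C}  (a subset of F^(n-i)) *)
Definition Fcode (n : nat) (C : {vspace 'rV[F]_n}) (i : nat) : {set 'rV[F]_(n - i)} :=
  [set c : 'rV[F]_(n - i) | padL i n c \in C].

Definition dotv (n : nat) (u v : 'rV[F]_n) : F := \sum_(j < n) u ord0 j * v ord0 j.

Definition dual_code (n : nat) (C : {vspace 'rV[F]_n}) : {set 'rV[F]_n} :=
  [set y : 'rV[F]_n | [forall c : 'rV[F]_n, (c \in C) ==> (dotv c y == 0)]].

Definition cwmul (n : nat) (x y : 'rV[F]_n) : 'rV[F]_n := \row_(j < n) (x ord0 j * y ord0 j).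

Definition formally_self_orthogonal (n : nat) (C : {vspace 'rV[F]_n}) : Prop :=
  exists x : 'rV[F]_n, (forall j, x ord0 j != 0) /\
    (forall c, c \in C -> exists2 y, y \in dual_code C & c = cwmul x y).

End Codes.

(** Let [u] and [v] be words of [C] whose supports meet at most in the
    coordinate [k].  Write [u = x * y] with [y] in the dual code.  Off [k], each
    term [v_j y_j] of [<v, y> = 0] vanishes because [x_j] is a unit, so
    [v_k y_k = 0] and therefore [u_k v_k = x_k y_k v_k = 0].  Applied at
    [k = i] to a word of [C] supported in [1..i] and a word supported in
    [i..n], this shows that the [i]-th coordinate vanishes on all words of
    [P_i] or on all words of [F_(i-1)], which is the dichotomy. *)
From HB Require Import structures.
From mathcomp Require Import all_boot all_order all_algebra all_field.
From mathcomp Require Import zify.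
Set Implicit Arguments. Unset Strict Implicit. Unset Printing Implicit Defensive.
Import GRing.Theory.
Local Open Scope ring_scope.

Section Padding.
Variable F : finFieldType.

(* The entry of a row vector at a natural index, [0] out of range; [padR]
   and [padL] are rows of such entries. *)
Definition vnth (m : nat) (c : 'rV[F]_m) (j : nat) : F :=
  oapp (fun t : 'I_m => c ord0 t) 0 (insub j).

Lemma vnth_ord (m : nat) (c : 'rV[F]_m) (t : 'I_m) : vnth c t = c ord0 t.
Proof. by rewrite /vnth valK. Qed.

Lemma vnth_default (m : nat) (c : 'rV[F]_m) (j : nat) :
  (m <= j)%N -> vnth c j = 0.
Proof. by move=> le_mj; rewrite /vnth insubF // ltnNge le_mj. Qed.

Lemma eq_from_vnth (m : nat) (c c' : 'rV[F]_m) :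
  (forall j, vnth c j = vnth c' j) -> c = c'.
Proof. by move=> eq_cc'; apply/rowP => t; rewrite -!vnth_ord. Qed.

Lemma vnth_row (m : nat) (g : nat -> F) (j : nat) :
  vnth (\row_(t < m) g t) j = if (j < m)%N then g j else 0.
Proof.
case: ltnP => [lt_jm | ?]; last by rewrite vnth_default.
by rewrite -[j]/(val (Ordinal lt_jm)) vnth_ord mxE.
Qed.

Lemma vnth_padR (l k : nat) (c : 'rV[F]_l) (j : nat) :
  vnth (padR k c) j = if (j < k)%N then vnth c j else 0.
Proof. exact: (@vnth_row k). Qed.

Lemma vnth_padL (s l k : nat) (c : 'rV[F]_l) (j : nat) :
  vnth (padL s k c) j =
  if (j < k)%N then (if (s <= j)%N then vnth c (j - s) else 0) else 0.
Proof.
exact: (@vnth_row k (fun j => if (s <= j)%N then vnth c (j - s) else 0)).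
Qed.

Lemma padR_padR (l m k : nat) (c : 'rV[F]_l) :
  (l <= m)%N -> padR k (padR m c) = padR k c.
Proof.
move=> le_lm; apply: eq_from_vnth => j; rewrite !vnth_padR.
case: (ltnP j k) => // _; case: ltnP => // le_mj.
by rewrite vnth_default // (leq_trans le_lm).
Qed.

Lemma padL_padL (a b l m k : nat) (c : 'rV[F]_l) :
  (b + l <= m)%N -> padL a k (padL b m c) = padL (a + b) k c.
Proof.
move=> le_blm; apply: eq_from_vnth => j; rewrite !vnth_padL.
case: (ltnP j k) => // _.
have [le_abj | lt_jab] := leqP (a + b) j.
  rewrite ifT; last by lia.
  case: ltnP => [_ | le_mj]; first by rewrite ifT ?subnDA //; lia.
  by rewrite vnth_default //; lia.
by case: (leqP a j) => // le_aj; case: ifP => // _; rewrite ifF //; lia.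
Qed.

Lemma padR_padL_mul_eq0 (n m l : nat) (c : 'rV[F]_m.+1) (d : 'rV[F]_l)
    (j : 'I_n) :
  val j != m -> padR n c ord0 j * padL m n d ord0 j = 0.
Proof.
move=> ne_jm; rewrite -!vnth_ord vnth_padR vnth_padL ltn_ord.
case: (ltnP j m) => [lt_jm | le_mj]; first by rewrite mulr0.
by rewrite vnth_default ?mul0r // ltn_neqAle eq_sym ne_jm.
Qed.

End Padding.

Section Codes.
Variables (F : finFieldType) (n : nat) (C : {vspace 'rV[F]_n}).

Lemma formally_self_orthogonal_mul_eq0 (u v : 'rV[F]_n) (k : 'I_n) :
  formally_self_orthogonal C -> u \in C -> v \in C ->
  (forall j, j != k -> u ord0 j * v ord0 j = 0) ->
  u ord0 k * v ord0 k = 0.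
Proof.
move=> [x [x_neq0 C_mul]] uC vC disj.
have [y y_dual u_xy] := C_mul u uC; subst u.
move: y_dual; rewrite inE => /forallP /(_ v); rewrite vC /= => /eqP.
rewrite /dotv (bigD1 k) //= big1 ?addr0 => [vy_k | j ne_jk].
  by rewrite mxE -mulrA (mulrC (y _ _)) vy_k mulr0.
have /eqP := disj j ne_jk.
by rewrite mxE -mulrA mulf_eq0 (negbTE (x_neq0 j)) mulrC => /eqP.
Qed.

Lemma Pcode_succ (m : nat) :
  (forall c, c \in Pcode C m.+1 -> vnth c m = 0) ->
  Pcode C m.+1 = [set padR m.+1 c | c in Pcode C m].
Proof.
move=> last0; apply/setP => c; apply/idP/imsetP => [cP | [c' c'P ->]].
  have c_pad : padR m.+1 (padR m c) = c.
    apply: eq_from_vnth => j; rewrite !vnth_padR.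
    case: ltnP => [lt_jSm | ?]; last by rewrite vnth_default.
    case: ltnP => // le_mj.
    have -> : j = m by lia.
    by rewrite last0.
  exists (padR m c); rewrite // inE -(padR_padR _ _ (leqnSn m)) c_pad.
  by rewrite inE in cP.
by move: c'P; rewrite !inE padR_padR.
Qed.

Lemma Fcode_succ (m : nat) : (m < n)%N ->
  (forall d, d \in Fcode C m -> vnth d 0 = 0) ->
  Fcode C m = [set padL 1 (n - m) d | d in Fcode C m.+1].
Proof.
move=> lt_mn first0.
have padL_padL1 (d : 'rV[F]_(n - m.+1)) :
    padL m n (padL 1 (n - m) d) = padL m.+1 n d.
  by rewrite padL_padL ?addn1 //; lia.
apply/setP => d; apply/idP/imsetP => [dP | [d' d'P ->]]; last first.
  by move: d'P; rewrite !inE padL_padL1.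
pose d' : 'rV[F]_(n - m.+1) := \row_(t < n - m.+1) vnth d t.+1.
have d_pad : padL 1 (n - m) d' = d.
  apply: eq_from_vnth => j; rewrite vnth_padL.
  case: ltnP => [lt_j | ?]; last by rewrite vnth_default.
  case: j lt_j => [|j] lt_j; first by rewrite first0.
  by rewrite subn1 /= (vnth_row _ (fun k => vnth d k.+1)) ifT //; lia.
exists d'; last by rewrite d_pad.
by move: dP; rewrite !inE -padL_padL1 d_pad.
Qed.

End Codes.

Theorem proposition4p2 (F : finFieldType) (n : nat) (C : {vspace 'rV[F]_n}) :
  formally_self_orthogonal C ->
  forall i : nat, (1 <= i <= n)%N ->
    Pcode C i = [set padR i c | c in Pcode C i.-1] \/
    Fcode C i.-1 = [set padL 1 (n - i.-1) c | c in Fcode C i].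
Proof.
move=> fsoC [//|m] /andP[_ lt_mn] /=.
have [Pzero | /forall_inPn[c cP cm]] := boolP [forall c in Pcode C m.+1, vnth c m == 0].
  by left; apply: Pcode_succ => c cP; apply/eqP; move/forall_inP: Pzero; apply.
have [Fzero | /forall_inPn[d dP d0]] := boolP [forall d in Fcode C m, vnth d 0 == 0].
  by right; apply: Fcode_succ => // d dP; apply/eqP; move/forall_inP: Fzero; apply.
move: cP dP; rewrite !inE => cP dP.
have disj (j : 'I_n) :
    j != Ordinal lt_mn -> padR n c ord0 j * padL m n d ord0 j = 0.
  by rewrite -val_eqE; apply: padR_padL_mul_eq0.
have /eqP := formally_self_orthogonal_mul_eq0 fsoC cP dP disj.
by rewrite mulf_eq0 -!vnth_ord vnth_padR vnth_padL lt_mn leqnn subnn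
  (negbTE cm) (negbTE d0).
Qed.
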